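(* Let $(\mathcal{N},P_S)$ be the $Z_0/Z_1$ channel and $(\mathcal{N}^{\mathrm{CSIR}},P_S)$ its associated channel with CSIR. Then $$\eta^{\mathrm{NS},\mathrm{ca}}_{\mathrm{opt},M=2,n=2}(\mathcal{N}^{\mathrm{CSIR}},P_S)\ \ge\ \eta^{\mathrm{C},\mathrm{ca}}_{\mathrm{opt},M=2,n=2}(\mathcal{N}^{\mathrm{CSIR}},P_S)\ \ge\ \tfrac78,$$ and $$\eta^{\mathrm{NS},\mathrm{ca}}_{\mathrm{opt},M=2,n=2}(\mathcal{N},P_S)\ \le\ \tfrac{13}{16}.$$
   Context: A channel with state $(\mathcal{N},P_S)$ consists of finite sets $\mathcal{X},\mathcal{Y},\mathcal{S}$, a conditional distribution $\mathcal{N}(y\mid x,s)$ and a state distribution $P_S$; over $n$ uses, $P_S^{\otimes n}(s^n)=\prod_i P_S(s_i)$ and $\mathcal{N}^{\otimes n}(y^n\mid x^n,s^n)=\prod_i\mathcal{N}(y_i\mid x_i,s_i)$. Notation: $x^i=(x_1,\dots,x_i)$, $x_{i+1}^n=(x_{i+1},\dots,x_n)$, $[M]=\{1,\dots,M\}$. The $Z_0/Z_1$ channel: $\mathcal{X}=\mathcal{Y}=\mathcal{S}=\{0,1\}$, $P_S(0)=P_S(1)=1/2$, $\mathcal{N}(0\mid0,0)=1$, $\mathcal{N}(1\mid0,0)=0$, $\mathcal{N}(0\mid1,0)=\mathcal{N}(1\mid1,0)=1/2$, $\mathcal{N}(1\mid1,1)=1$, $\mathcal{N}(0\mid1,1)=0$,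 $\mathcal{N}(0\mid0,1)=\mathcal{N}(1\mid0,1)=1/2$. The associated channel with CSIR $(\mathcal{N}^{\mathrm{CSIR}},P_S)$ is the channel with state having the same input and state alphabets, output alphabet $\mathcal{Y}\times\mathcal{S}$, the same $P_S$, and $\mathcal{N}^{\mathrm{CSIR}}((y,s^R)\mid x,s)=\mathcal{N}(y\mid x,s)\,\mathbb{I}[s^R=s]$. A classical coding scheme with causal CSIT with message size $M$ and blocklength $n$ consists of a shared random variable $Q$ on a finite set with distribution $P_Q$, an encoder $E(x^n\mid w,s^n,q)=\prod_{j=1}^n E(x_j\mid x^{j-1},w,s^j,q)$, and a decoder $D(\hat w\mid y^n,q)$; its success probability is $\eta=\frac1M\sum_w\sum_q P_Q(q)\sum_{x^n,s^n,y^n}P_S^{\otimes n}(s^n)E(x^n\mid w,s^n,q)\mathcal{N}^{\otimes n}(y^n\mid x^n,s^n)D(w\mid y^n,q)$ (with $\mathcal{N}$ replaced by the channel under consideration). An NS-assisted coding scheme with causal CSIT with message size $M$ and blocklength $n$ is a conditional distribution $Z(x^n,\hat w\mid w,s^n,y^n)$ on $\mathcal{X}^n\times[M]$ given $(w,s^n,y^n)\in[M]\times\mathcal{S}^n\times\mathcal{Y}^n$ such that: (C1) $\sum_{\hat w}Z(x^n,\hat w\mid w,s^n,y^n)$ does not depend on $y^n$; (C2) $\sum_{x^n}Z(x^n,\hat w\mid w,s^n,y^n)$ does not depend on $(w,s^n)$; (C3) for each $i\in[n-1]$, $\sum_{x_{i+1}^n}Z(x^n,\hat w\mid w,s^n,y^n)$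 does not depend on $s_{i+1}^n$. (For the CSIR channel, $\mathcal{Y}$ is replaced by $\mathcal{Y}\times\mathcal{S}$.) Its success probability is $\eta(Z)=\frac1M\sum_{w}\sum_{x^n,s^n,y^n}P_S^{\otimes n}(s^n)\mathcal{N}^{\otimes n}(y^n\mid x^n,s^n)Z(x^n,w\mid w,s^n,y^n)$. $\eta^{\mathrm{C},\mathrm{ca}}_{\mathrm{opt},M,n}$ and $\eta^{\mathrm{NS},\mathrm{ca}}_{\mathrm{opt},M,n}$ denote the suprema of the success probability over all classical, respectively NS-assisted, coding schemes with causal CSIT with message size $M$ and blocklength $n$ for the indicated channel. *)

From HB Require Import structures.
From mathcomp Require Import all_boot all_order all_algebra.
From mathcomp Require Import boolp classical_sets reals.
Set Implicit Arguments. Unset Strict Implicit. Unset Printing Implicit Defensive.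
Import Order.TTheory GRing.Theory Num.Theory.
Local Open Scope ring_scope.

Section Channels.
Variable R : realType.

(* Words of length n over an alphabet A: x^n = (x_1,...,x_n), indexed by 'I_n
   (0-based: coordinate k : 'I_n stands for x_{k+1}). *)
Definition word (n : nat) (A : finType) := {ffun 'I_n -> A}.

(* A channel with state: Nch x s y = N(y | x, s); PS s = P_S(s). *)
Variables (X Y S : finType).

Definition PSn (PS : S -> R) n (s : word n S) : R := \prod_(i < n) PS (s i).
Definition Nn (Nch : X -> S -> Y -> R) n (x : word n X) (s : word n S)
  (y : word n Y) : R := \prod_(i < n) Nch (x i) (s i) (y i).

(* Classical coding scheme with causal CSIT, message set [M] = 'I_M,
   blocklength n, shared randomness Q on the finite set Q.
   enc j x w s q xj = E(x_j | x^{j-1}, w, s^j, q) ; it is given the full words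
   x, s but must only depend on x_k (k < j) and s_k (k <= j) (causality).
   dec y q w' = D(w' | y^n, q). *)
Record cscheme (M n : nat) (Q : finType) := CScheme {
  PQ : Q -> R;
  enc : 'I_n -> word n X -> 'I_M -> word n S -> Q -> X -> R;
  dec : word n Y -> Q -> 'I_M -> R;
  PQ_ge0 : forall q, 0 <= PQ q;
  PQ_sum : \sum_q PQ q = 1;
  enc_ge0 : forall j x w s q xj, 0 <= enc j x w s q xj;
  enc_sum : forall j x w s q, \sum_xj enc j x w s q xj = 1;
  enc_causal : forall (j : 'I_n) (x x' : word n X) w (s s' : word n S) q xj,
      (forall k : 'I_n, (k < j)%N -> x k = x' k) ->
      (forall k : 'I_n, (k <= j)%N -> s k = s' k) ->
      enc j x w s q xj = enc j x' w s' q xj;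
  dec_ge0 : forall y q w', 0 <= dec y q w';
  dec_sum : forall (y : word n Y) q, \sum_w' dec y q w' = 1
}.

Definition encn M n Q (c : cscheme M n Q) (x : word n X) w s q : R :=
  \prod_(j < n) enc c j x w s q (x j).

Definition succ_C (PS : S -> R) (Nch : X -> S -> Y -> R) M n Q
  (c : cscheme M n Q) : R :=
  M%:R^-1 * \sum_(w : 'I_M) \sum_(q : Q) PQ c q *
    \sum_(x : word n X) \sum_(s : word n S) \sum_(y : word n Y)
      PSn PS s * encn c x w s q * Nn Nch x s y * dec c y q w.

Definition eta_C_opt (PS : S -> R) (Nch : X -> S -> Y -> R) (M n : nat) : R :=
  sup [set r | exists (Q : finType) (c : cscheme M n Q), r = succ_C PS Nch c].

(* NS-assisted coding scheme with causal CSIT: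
   Z w s y x w' = Z(x^n, w' | w, s^n, y^n). *)
Record nsscheme (M n : nat) := NSScheme {
  Zns : 'I_M -> word n S -> word n Y -> word n X -> 'I_M -> R;
  Z_ge0 : forall w s y x w', 0 <= Zns w s y x w';
  Z_sum : forall w (s : word n S) (y : word n Y), \sum_x \sum_w' Zns w s y x w' = 1;
  Z_C1 : forall w (s : word n S) (y y' : word n Y) (x : word n X),
      \sum_w' Zns w s y x w' = \sum_w' Zns w s y' x w';
  Z_C2 : forall w w' (s s' : word n S) (y : word n Y) wh,
      \sum_x Zns w s y x wh = \sum_x Zns w' s' y x wh;
  Z_C3 : forall (i : nat), (1 <= i)%N -> (i <= n - 1)%N ->
      forall w (s s' : word n S) (y : word n Y) (x : word n X) wh,
      (forall k : 'I_n, (k < i)%N -> s k = s' k) ->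
      \sum_(x' : word n X | [forall k : 'I_n, (k < i)%N ==> (x' k == x k)])
          Zns w s y x' wh =
      \sum_(x' : word n X | [forall k : 'I_n, (k < i)%N ==> (x' k == x k)])
          Zns w s' y x' wh
}.

Definition succ_NS (PS : S -> R) (Nch : X -> S -> Y -> R) M n
  (Z : nsscheme M n) : R :=
  M%:R^-1 * \sum_(w : 'I_M)
    \sum_(x : word n X) \sum_(s : word n S) \sum_(y : word n Y)
      PSn PS s * Nn Nch x s y * Zns Z w s y x w.

Definition eta_NS_opt (PS : S -> R) (Nch : X -> S -> Y -> R) (M n : nat) : R :=
  sup [set r | exists Z : nsscheme M n, r = succ_NS PS Nch Z].

End Channels.

Definition csir (R : realType) (X Y S : finType) (Nch : X -> S -> Y -> R)
  : X -> S -> (Y * S)%type -> R :=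
  fun x s ys => Nch x s ys.1 * (ys.2 == s)%:R.

(* The Z0/Z1 channel: X = Y = S = bool (false = 0, true = 1). *)
Definition PS_Z01 (R : realType) : bool -> R := fun _ => 2^-1.
Definition N_Z01 (R : realType) : bool -> bool -> bool -> R :=
  fun x s y => if x == s then (y == x)%:R else 2^-1.

(* Each output letter of the Z0/Z1 channel is, with probability 1/2 each, a
   copy of the input letter or of the state letter.  Averaging an NS scheme
   over the messages gives a kernel r(s,y,x), the probability of sending x and
   decoding correctly, with sum_x r = 1/M and r <= p, the input distribution;
   causality makes the first-letter marginal of r independent of the second
   state letter.  Expanding the product over the two letters, 16 times the
   success probability is the sum, over the four choices of a source (input
   or state) for each output letter, of the mass of r on the resulting output:
   copying the state twice gives exactly 2, copying the input twice at most 4,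
   and the two mixed choices together at most 7, because by causality they
   compete for the same budget 1/2 per output.  Hence eta_NS <= 13/16.
   With CSIR, sending the state for message 0 and its complement for message 1
   and decoding 1 iff some output letter differs from the state succeeds with
   probability (1 + 3/4) / 2 = 7/8; classical schemes with causal CSIT are
   NS schemes with the same success probability. *)

From HB Require Import structures.
From mathcomp Require Import all_boot all_order all_algebra.
From mathcomp Require Import boolp classical_sets reals.
From mathcomp Require Import ring lra.
Set Implicit Arguments. Unset Strict Implicit. Unset Printing Implicit Defensive.
Import Order.TTheory GRing.Theory Num.Theory.
Local Open Scope ring_scope.

Definition word2 {A : finType} (a b : A) : word 2 A :=
  [ffun i : 'I_2 => if i == ord0 then a else b].

Lemma word2_0 (A : finType) (a b : A) : word2 a b ord0 = a.
Proof. by rewrite ffunE. Qed.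

Lemma word2_1 (A : finType) (a b : A) : word2 a b ord_max = b.
Proof. by rewrite ffunE. Qed.

Lemma word2K (A : finType) (x : word 2 A) : word2 (x ord0) (x ord_max) = x.
Proof. by apply/ffunP => -[[|[|//]] i2]; rewrite ffunE; congr (x _); apply: val_inj. Qed.

Lemma big_word2 (R : nmodType) (A : finType) (F : word 2 A -> R) :
  \sum_(x : word 2 A) F x = \sum_(a : A) \sum_(b : A) F (word2 a b).
Proof.
rewrite pair_bigA (reindex (fun ab : A * A => word2 ab.1 ab.2)) //.
by exists (fun x : word 2 A => (x ord0, x ord_max)) => [[a b]|x] _;
  rewrite ?word2_0 ?word2_1 ?word2K.
Qed.

Lemma big_word2_prefix1 (R : nmodType) (A : finType) (F : word 2 A -> R) (x : word 2 A) :
  \sum_(x' : word 2 A | [forall k : 'I_2, (k < 1)%N ==> (x' k == x k)]) F x'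
  = \sum_(b : A) F (word2 (x ord0) b).
Proof.
rewrite big_mkcond big_word2 (bigD1 (x ord0)) //= [X in _ + X]big1 ?addr0 => [|a /negbTE xa].
  apply: eq_bigr => b _; rewrite ifT //; apply/forallP => -[[|//] k1] /=.
  by rewrite (_ : Ordinal k1 = ord0) ?word2_0 //; apply: val_inj.
by apply: big1 => b _; rewrite ifF //; apply/negbTE/forallP => /(_ ord0); rewrite word2_0 xa.
Qed.

Lemma big_ord2 (R : Type) (idx : R) (op : Monoid.law idx) (F : 'I_2 -> R) :
  \big[op/idx]_(i < 2) F i = op (F ord0) (F ord_max).
Proof. by rewrite big_ord_recl big_ord1; congr (op _ (F _)); apply: val_inj. Qed.

Lemma sum_unit (R : nmodType) (F : unit -> R) : \sum_(q : unit) F q = F tt.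
Proof. by rewrite (big_pred1 tt) // => -[]. Qed.

Lemma sum_pair (R : nmodType) (A B : finType) (F : A * B -> R) :
  \sum_(ab : A * B) F ab = \sum_(a : A) \sum_(b : B) F (a, b).
Proof. by rewrite pair_bigA; apply: eq_bigr => -[]. Qed.

Lemma big_indicator_eq (R : pzSemiRingType) (T : finType) (a : T) (F : T -> R) :
  \sum_(t : T) (t == a)%:R * F t = F a.
Proof. by rewrite (bigD1 a) //= eqxx mul1r big1 ?addr0 // => t /negbTE ->; rewrite mul0r. Qed.

Lemma prod_eq_indicator (R : comPzSemiRingType) (n : nat) (A : finType) (x y : word n A) :
  \prod_(i < n) (x i == y i)%:R = (x == y)%:R :> R.
Proof.
have [<-|/eqP xy] := eqVneq x y; first by rewrite big1 // => i _; rewrite eqxx.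
have [i xyi] : exists i, x i != y i.
  by apply/existsP; apply: contra_notT xy => /existsPn xy; apply/ffunP => i; apply/eqP/negPn.
by rewrite (bigD1 i) //= (negbTE xyi) mul0r.
Qed.

Lemma sum_prod_word (R : comPzSemiRingType) (n : nat) (A : finType) (F : 'I_n -> A -> R) :
  (forall i, \sum_a F i a = 1) -> \sum_(x : word n A) \prod_(i < n) F i (x i) = 1.
Proof. by move=> F1; rewrite -bigA_distr_bigA big1 // => i _; apply: F1. Qed.

Lemma sup_le_ge0_ubound (R : realType) (A : set R) (x : R) :
  0 <= x -> ubound A x -> sup A <= x.
Proof.
move=> x_ge0 Ax; have [A0|A0] := pselect (A !=set0)%classic; first exact: ge_sup.
suff -> : A = set0 by rewrite sup0.
by apply/eqP; apply: contra_notT A0 => /set0P.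
Qed.

Section RowsAndColumns.
Variables (R : realDomainType) (A B : finType) (f : A -> B -> R).
Hypothesis f_ge0 : forall a b, 0 <= f a b.

Lemma sum_row_le a : \sum_b f a b <= \sum_a' \sum_b f a' b.
Proof. by rewrite [leRHS](bigD1 a) //= lerDl sumr_ge0 // => a' _; apply: sumr_ge0. Qed.

Lemma sum_col_le b : \sum_a f a b <= \sum_a \sum_b' f a b'.
Proof.
by apply: ler_sum => a _; rewrite [leRHS](bigD1 b) //= lerDl sumr_ge0.
Qed.

Lemma sum_row_add_col_le a b :
  \sum_b' f a b' + \sum_a' f a' b <= \sum_a' \sum_b' f a' b' + f a b.
Proof.
rewrite [in leRHS](bigD1 a) //= (bigD1 a) //=.
suff: \sum_(a' | a' != a) f a' b <= \sum_(a' | a' != a) \sum_b' f a' b' by lra.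
by apply: ler_sum => a' _; rewrite [leRHS](bigD1 b) //= lerDl sumr_ge0.
Qed.

End RowsAndColumns.

Section NSMarginals.
Variables (R : realType) (X Y S : finType) (M n : nat) (Z : nsscheme R X Y S M n).
Hypothesis M_gt0 : (0 < M)%N.

Definition ns_correct (s : word n S) (y : word n Y) (x : word n X) : R :=
  M%:R^-1 * \sum_(w : 'I_M) Zns Z w s y x w.

Definition ns_input (s : word n S) (y : word n Y) (x : word n X) : R :=
  M%:R^-1 * \sum_(w : 'I_M) \sum_(w' : 'I_M) Zns Z w s y x w'.

Lemma succ_NS_correctE (PS : S -> R) (N : X -> S -> Y -> R) :
  succ_NS PS N Z =
  \sum_(s : word n S) \sum_(x : word n X) \sum_(y : word n Y)
     PSn PS s * Nn N x s y * ns_correct s y x.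
Proof.
rewrite /succ_NS /ns_correct mulr_sumr.
transitivity (\sum_w \sum_s \sum_x \sum_y
  M%:R^-1 * (PSn PS s * Nn N x s y * Zns Z w s y x w)).
  apply: eq_bigr => w _; rewrite exchange_big mulr_sumr; apply: eq_bigr => s _.
  by rewrite mulr_sumr; apply: eq_bigr => x _; rewrite mulr_sumr.
rewrite exchange_big; apply: eq_bigr => s _; rewrite exchange_big; apply: eq_bigr => x _.
rewrite exchange_big; apply: eq_bigr => y _.
by rewrite [in RHS]mulr_sumr [in RHS]mulr_sumr; apply: eq_bigr => w _; rewrite mulrCA.
Qed.

Lemma ns_correct_ge0 s y x : 0 <= ns_correct s y x.
Proof. by rewrite mulr_ge0 ?invr_ge0 ?ler0n ?sumr_ge0 // => w _; apply: Z_ge0. Qed.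

Lemma ns_correct_le_input s y x : ns_correct s y x <= ns_input s y x.
Proof.
rewrite ler_wpM2l ?invr_ge0 ?ler0n // ler_sum // => w _.
by rewrite (bigD1 w) //= lerDl sumr_ge0 // => w' _; apply: Z_ge0.
Qed.

Lemma ns_input_output_free s y y' x : ns_input s y x = ns_input s y' x.
Proof. by rewrite /ns_input; congr (_ * _); apply: eq_bigr => w _; apply: Z_C1. Qed.

Lemma sum_ns_input s y : \sum_x ns_input s y x = 1.
Proof.
rewrite -mulr_sumr exchange_big /=.
under eq_bigr => w _ do rewrite Z_sum.
by rewrite sumr_const card_ord mulVf // pnatr_eq0 -lt0n.
Qed.

Lemma sum_ns_correct s y : \sum_x ns_correct s y x = M%:R^-1.
Proof.
pose w0 : 'I_M := Ordinal M_gt0.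
rewrite -mulr_sumr exchange_big /=.
under eq_bigr => w _ do rewrite (Z_C2 Z w w0 s s).
by rewrite -exchange_big /= Z_sum mulr1.
Qed.

Lemma ns_correct_causal (i : nat) : (1 <= i)%N -> (i <= n - 1)%N ->
  forall (s s' : word n S) (y : word n Y) (x : word n X),
  (forall k : 'I_n, (k < i)%N -> s k = s' k) ->
  \sum_(x' : word n X | [forall k : 'I_n, (k < i)%N ==> (x' k == x k)]) ns_correct s y x' =
  \sum_(x' : word n X | [forall k : 'I_n, (k < i)%N ==> (x' k == x k)]) ns_correct s' y x'.
Proof.
move=> i_ge1 i_le s s' y x ss'.
rewrite -!mulr_sumr (exchange_big_dep xpredT) // [in RHS](exchange_big_dep xpredT) //=.
congr (_ * _); apply: eq_bigr => w _.
by rewrite !(eq_bigl _ _ (fun x' => andbT _)); apply: Z_C3.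
Qed.

Lemma succ_NS_le1 (PS : S -> R) (N : X -> S -> Y -> R) :
  (forall s, 0 <= PS s) -> \sum_s PS s = 1 ->
  (forall x s y, 0 <= N x s y) -> (forall x s, \sum_y N x s y = 1) ->
  succ_NS PS N Z <= 1.
Proof.
move=> PS_ge0 PS1 N_ge0 N1; rewrite succ_NS_correctE.
have [y0 _|noY] := pickP (@predT (word n Y)); last first.
  rewrite big1 ?ler01 // => s _; rewrite big1 // => x _.
  by rewrite big1 // => y; have := noY y.
have <- : \sum_s PSn PS s * \sum_x (ns_input s y0 x * \sum_y Nn N x s y) = 1.
  under eq_bigr => s _ do under eq_bigr => x _ do
    rewrite (sum_prod_word (F := fun i a => N (x i) (s i) a)) // mulr1.
  under eq_bigr => s _ do rewrite sum_ns_input mulr1.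
  exact: (sum_prod_word (F := fun _ a => PS a)).
apply: ler_sum => s _; rewrite mulr_sumr; apply: ler_sum => x _.
rewrite 2!mulr_sumr; apply: ler_sum => y _.
rewrite (ns_input_output_free s y0 y) mulrAC mulrA ler_wpM2r ?prodr_ge0 //.
by rewrite ler_wpM2l ?prodr_ge0 ?ns_correct_le_input.
Qed.

End NSMarginals.

Lemma csir_ge0 (R : realType) (X Y S : finType) (N : X -> S -> Y -> R) :
  (forall x s y, 0 <= N x s y) -> forall x s ys, 0 <= csir N x s ys.
Proof. by move=> N_ge0 x s ys; rewrite mulr_ge0 ?ler0n. Qed.

Lemma sum_csir (R : realType) (X Y S : finType) (N : X -> S -> Y -> R) x s :
  \sum_(ys : Y * S) csir N x s ys = \sum_y N x s y.
Proof.
rewrite sum_pair; apply: eq_bigr => y _.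
by under eq_bigr => s' _ do rewrite /csir /= mulrC; rewrite big_indicator_eq.
Qed.

Section ClassicalAsNS.
Variables (R : realType) (X Y S : finType) (M : nat) (Q : finType).
(* [x0] only witnesses that X is inhabited: for empty X the encoder axioms
   hold vacuously and the induced NS scheme would not be normalized. *)
Variables (c : cscheme R X Y S M 2 Q) (x0 : X).

Lemma encn_ge0 x w s q : 0 <= encn c x w s q.
Proof. by apply: prodr_ge0 => j _; apply: enc_ge0. Qed.

Lemma sum_encn_prefix x1 w s q :
  \sum_x2 encn c (word2 x1 x2) w s q = enc c ord0 (word2 x0 x0) w s q x1.
Proof.
rewrite /encn; under eq_bigr => x2 _ do rewrite big_ord2 /= !word2_0 word2_1.
have enc0 x2 : enc c ord0 (word2 x1 x2) w s q x1 = enc c ord0 (word2 x0 x0) w s q x1.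
  by apply: enc_causal.
have enc1 x2 : enc c ord_max (word2 x1 x2) w s q x2 = enc c ord_max (word2 x1 x0) w s q x2.
  by apply: enc_causal => // -[[|//] k1] _; rewrite !ffunE.
under eq_bigr => x2 _ do rewrite enc0 enc1.
by rewrite -mulr_sumr enc_sum mulr1.
Qed.

Lemma sum_encn w s q : \sum_x encn c x w s q = 1.
Proof.
by rewrite big_word2; under eq_bigr => x1 _ do rewrite sum_encn_prefix; apply: enc_sum.
Qed.

Definition cscheme_kernel w s y x w' : R :=
  \sum_q PQ c q * (encn c x w s q * dec c y q w').

Lemma cscheme_kernel_ge0 w s y x w' : 0 <= cscheme_kernel w s y x w'.
Proof.
by apply: sumr_ge0 => q _; rewrite !mulr_ge0 ?PQ_ge0 ?encn_ge0 ?dec_ge0.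
Qed.

Lemma cscheme_kernel_sum w s y : \sum_x \sum_w' cscheme_kernel w s y x w' = 1.
Proof.
rewrite /cscheme_kernel -(PQ_sum c).
under eq_bigr => x _ do rewrite exchange_big.
rewrite exchange_big; apply: eq_bigr => q _.
under eq_bigr => x _ do rewrite -mulr_sumr -mulr_sumr dec_sum mulr1.
by rewrite -mulr_sumr sum_encn mulr1.
Qed.

Lemma cscheme_kernel_C1 w s y y' x :
  \sum_w' cscheme_kernel w s y x w' = \sum_w' cscheme_kernel w s y' x w'.
Proof.
rewrite /cscheme_kernel exchange_big [RHS]exchange_big /=; apply: eq_bigr => q _.
by rewrite -!mulr_sumr !dec_sum.
Qed.

Lemma cscheme_kernel_C2 w w' s s' y wh :
  \sum_x cscheme_kernel w s y x wh = \sum_x cscheme_kernel w' s' y x wh.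
Proof.
rewrite /cscheme_kernel exchange_big [RHS]exchange_big /=; apply: eq_bigr => q _.
by rewrite -!mulr_sumr -!mulr_suml !sum_encn.
Qed.

Lemma cscheme_kernel_C3 (i : nat) : (1 <= i)%N -> (i <= 2 - 1)%N ->
  forall w (s s' : word 2 S) (y : word 2 Y) (x : word 2 X) wh,
  (forall k : 'I_2, (k < i)%N -> s k = s' k) ->
  \sum_(x' : word 2 X | [forall k : 'I_2, (k < i)%N ==> (x' k == x k)])
     cscheme_kernel w s y x' wh =
  \sum_(x' : word 2 X | [forall k : 'I_2, (k < i)%N ==> (x' k == x k)])
     cscheme_kernel w s' y x' wh.
Proof.
move=> i_ge1 i_le1; have -> : i = 1%N by apply/eqP; rewrite eqn_leq i_le1.
move=> w s s' y x wh ss'; rewrite !big_word2_prefix1.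
rewrite /cscheme_kernel exchange_big [RHS]exchange_big /=; apply: eq_bigr => q _.
rewrite -!mulr_sumr -!mulr_suml !sum_encn_prefix.
by congr (_ * (_ * _)); apply: enc_causal => // -[[|//] k1] _; apply: ss'.
Qed.

Definition ns_of_cscheme : nsscheme R X Y S M 2 :=
  NSScheme cscheme_kernel_ge0 cscheme_kernel_sum cscheme_kernel_C1
    cscheme_kernel_C2 cscheme_kernel_C3.

Lemma succ_ns_of_cscheme (PS : S -> R) (N : X -> S -> Y -> R) :
  succ_C PS N c = succ_NS PS N ns_of_cscheme.
Proof.
rewrite /succ_C /succ_NS /=; congr (_ * _); apply: eq_bigr => w _.
under eq_bigr => q _ do rewrite mulr_sumr.
rewrite exchange_big; apply: eq_bigr => x _.
under eq_bigr => q _ do rewrite mulr_sumr.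
rewrite exchange_big; apply: eq_bigr => s _.
under eq_bigr => q _ do rewrite mulr_sumr.
rewrite exchange_big; apply: eq_bigr => y _.
by rewrite /cscheme_kernel mulr_sumr; apply: eq_bigr => q _; ring.
Qed.

End ClassicalAsNS.

Definition splice {n : nat} (c x s : word n bool) : word n bool :=
  [ffun i => if c i then x i else s i].

Lemma splice_word2 (c1 c2 x1 x2 s1 s2 : bool) :
  splice (word2 c1 c2) (word2 x1 x2) (word2 s1 s2) =
  word2 (if c1 then x1 else s1) (if c2 then x2 else s2).
Proof. by apply/ffunP => i; rewrite !ffunE; case: (i == ord0). Qed.

Section Z01.
Variable R : realType.

Lemma N_Z01_mix x s y :
  N_Z01 R x s y = 2^-1 * \sum_(b : bool) ((if b then x else s) == y)%:R.
Proof. by rewrite /N_Z01 big_bool; case: x s y => [] [] [] /=; rewrite ?mulr1n ?mulr0n; lra. Qed.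

Lemma N_Z01_ge0 x s y : 0 <= N_Z01 R x s y.
Proof. by rewrite /N_Z01; case: (_ == _); rewrite ?ler0n ?invr_ge0 ?ler0n. Qed.

Lemma sum_N_Z01 x s : \sum_y N_Z01 R x s y = 1.
Proof. by rewrite big_bool /N_Z01; case: x s => [] [] /=; rewrite ?mulr1n ?mulr0n; lra. Qed.

Lemma sum_PS_Z01 : \sum_s PS_Z01 R s = 1.
Proof. by rewrite big_bool /PS_Z01 /=; lra. Qed.

Lemma PSn_Z01 n (s : word n bool) : PSn (PS_Z01 R) s = 2^-1 ^+ n.
Proof. by rewrite /PSn prodr_const card_ord. Qed.

Lemma Nn_Z01_splice n (x s y : word n bool) :
  Nn (N_Z01 R) x s y = 2^-1 ^+ n * \sum_(c : word n bool) (splice c x s == y)%:R.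
Proof.
rewrite /Nn (eq_bigr _ (fun i _ => N_Z01_mix _ _ _)) big_split /= prodr_const card_ord.
rewrite bigA_distr_bigA /=; congr (_ * _); apply: eq_bigr => c _.
by rewrite -prod_eq_indicator; apply: eq_bigr => i _; rewrite ffunE.
Qed.

Lemma Z01_success_splice n (r : word n bool -> word n bool -> word n bool -> R) :
  \sum_(s : word n bool) \sum_(x : word n bool) \sum_(y : word n bool)
     PSn (PS_Z01 R) s * Nn (N_Z01 R) x s y * r s y x
  = 4^-1 ^+ n * \sum_(c : word n bool) \sum_s \sum_x r s (splice c x s) x.
Proof.
transitivity (\sum_s \sum_x \sum_c \sum_y
    4^-1 ^+ n * ((y == splice c x s)%:R * r s y x)).
  apply: eq_bigr => s _; apply: eq_bigr => x _; rewrite exchange_big /=.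
  apply: eq_bigr => y _; rewrite PSn_Z01 Nn_Z01_splice !mulr_sumr mulr_suml.
  apply: eq_bigr => c _; rewrite eq_sym -[4]/(2 * 2)%:R natrM invfM exprMn.
  by rewrite !mulrA.
under eq_bigr => s _ do under eq_bigr => x _ do
  under eq_bigr => c _ do rewrite -mulr_sumr big_indicator_eq.
under eq_bigr => s _ do rewrite exchange_big.
rewrite exchange_big mulr_sumr; apply: eq_bigr => c _.
by rewrite mulr_sumr; apply: eq_bigr => s _; rewrite mulr_sumr.
Qed.
End Z01.

Section Z01Kernel.
Variables (R : realType) (r : word 2 bool -> word 2 bool -> word 2 bool -> R)
  (p : word 2 bool -> word 2 bool -> R).
Hypotheses (r_ge0 : forall s y x, 0 <= r s y x) (r_le_p : forall s y x, r s y x <= p s x).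
Hypothesis sum_r : forall s y, \sum_x r s y x = 2^-1.
Hypothesis sum_p : forall s, \sum_x p s x = 1.
Hypothesis r_causal : forall s1 s2 s2' y x1,
  \sum_x2 r (word2 s1 s2) y (word2 x1 x2) = \sum_x2 r (word2 s1 s2') y (word2 x1 x2).

Lemma correct_row_le s y a : \sum_b r s y (word2 a b) <= 2^-1.
Proof.
by rewrite -(sum_r s y) big_word2; apply: (sum_row_le (f := fun a b => r s y (word2 a b))).
Qed.

Lemma correct_col_le s y b : \sum_a r s y (word2 a b) <= 2^-1.
Proof.
by rewrite -(sum_r s y) big_word2; apply: (sum_col_le (f := fun a b => r s y (word2 a b))).
Qed.

Lemma correct_row_add_col_le s y a b :
  \sum_b' r s y (word2 a b') + \sum_a' r s y (word2 a' b) <= 2^-1 + r s y (word2 a b).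
Proof.
rewrite -(sum_r s y) big_word2.
exact: (sum_row_add_col_le (f := fun a b => r s y (word2 a b))).
Qed.

Lemma correct_row_le_input s y a : \sum_b r s y (word2 a b) <= \sum_b p s (word2 a b).
Proof. by apply: ler_sum => b _; apply: r_le_p. Qed.

Lemma causal_cross_bound s1 :
  \sum_s2 \sum_x1 \sum_x2 r (word2 s1 s2) (word2 x1 s2) (word2 x1 x2)
  + \sum_s2 \sum_x1 \sum_x2 r (word2 s1 s2) (word2 s1 x2) (word2 x1 x2) <= 7 / 2.
Proof.
(* By causality the first sum only involves the kernel at the state (s1, false).
   There, for each output (s1, y2), it shares the budget 1/2 with the
   corresponding term of the second sum, up to the diagonal entry, which is
   paid by p; all remaining terms are at most 1/2 or at most the mass that p
   gives to the first letter ~~ s1. *)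
have -> : \sum_s2 \sum_x1 \sum_x2 r (word2 s1 s2) (word2 x1 s2) (word2 x1 x2) =
          \sum_y2 \sum_x1 \sum_x2 r (word2 s1 false) (word2 x1 y2) (word2 x1 x2).
  by apply: eq_bigr => y2 _; apply: eq_bigr => x1 _; apply: r_causal.
under [X in _ + X]eq_bigr => s2 _ do rewrite exchange_big.
have cross y2 := correct_row_add_col_le (word2 s1 false) (word2 s1 y2) s1 y2.
have col y2 := correct_col_le (word2 s1 true) (word2 s1 y2) y2.
have corner y2 := r_le_p (word2 s1 false) (word2 s1 y2) (word2 s1 y2).
have far y2 := correct_row_le (word2 s1 false) (word2 (~~ s1) y2) (~~ s1).
have far_input y2 := correct_row_le_input (word2 s1 false) (word2 (~~ s1) y2) (~~ s1).
have := sum_p (word2 s1 false); rewrite big_word2.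
move: (cross true) (cross false) (col true) (col false) (corner true) (corner false)
  (far true) (far false) (far_input true) (far_input false).
clear cross col corner far far_input.
by case: s1; rewrite !big_bool /=; lra.
Qed.

Lemma state_splice_mass : \sum_s \sum_x r s (splice (word2 false false) x s) x = 2.
Proof.
under eq_bigr => s _ do under eq_bigr => x _ do
  rewrite -[x]word2K -[s]word2K splice_word2 /= !word2K.
under eq_bigr => s _ do rewrite sum_r.
by rewrite big_word2 !big_bool /=; lra.
Qed.

Lemma input_splice_mass : \sum_s \sum_x r s (splice (word2 true true) x s) x <= 4.
Proof.
under eq_bigr => s _ do under eq_bigr => x _ do
  rewrite -[x]word2K -[s]word2K splice_word2 /= !word2K.
have -> : 4 = \sum_(s : word 2 bool) \sum_x p s x.
  by under eq_bigr => s _ do rewrite sum_p; rewrite big_word2 !big_bool /=; lra.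
by apply: ler_sum => s _; apply: ler_sum => x _; apply: r_le_p.
Qed.

Lemma mixed_splice_mass :
  \sum_s \sum_x r s (splice (word2 true false) x s) x
  + \sum_s \sum_x r s (splice (word2 false true) x s) x <= 7.
Proof.
have splice_massE c1 c2 : \sum_s \sum_x r s (splice (word2 c1 c2) x s) x =
    \sum_s1 \sum_s2 \sum_x1 \sum_x2
      r (word2 s1 s2) (word2 (if c1 then x1 else s1) (if c2 then x2 else s2)) (word2 x1 x2).
  rewrite big_word2; apply: eq_bigr => s1 _; apply: eq_bigr => s2 _.
  by rewrite big_word2; apply: eq_bigr => x1 _; apply: eq_bigr => x2 _; rewrite splice_word2.
rewrite !splice_massE -big_split /=.
apply: le_trans (ler_sum _ (fun s1 _ => causal_cross_bound s1)) _.
by rewrite big_bool /=; lra.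
Qed.

Lemma Z01_kernel_success_le :
  \sum_s \sum_x \sum_y PSn (PS_Z01 R) s * Nn (N_Z01 R) x s y * r s y x <= 13 / 16.
Proof.
rewrite Z01_success_splice big_word2 !big_bool /= expr2.
have := state_splice_mass; have := input_splice_mass; have := mixed_splice_mass.
lra.
Qed.

End Z01Kernel.

Lemma Z01_NS_success_le (R : realType) (Z : nsscheme R bool bool bool 2 2) :
  succ_NS (PS_Z01 R) (N_Z01 R) Z <= 13 / 16.
Proof.
rewrite succ_NS_correctE.
apply: (Z01_kernel_success_le (p := fun s x => ns_input Z s (word2 false false) x)).
- by move=> s y x; apply: ns_correct_ge0.
- by move=> s y x; rewrite (ns_input_output_free Z s _ y); apply: ns_correct_le_input.
- by move=> s y; apply: sum_ns_correct.
- by move=> s; apply: sum_ns_input.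
move=> s1 s2 s2' y x1.
have := ns_correct_causal Z (i := 1) isT isT
  (s := word2 s1 s2) (s' := word2 s1 s2') y (word2 x1 x1).
rewrite !big_word2_prefix1 word2_0; apply.
by move=> -[[|//] k1] _; rewrite !ffunE.
Qed.

Lemma csir_Z01_success_le1 (R : realType) (Z : nsscheme R bool (bool * bool)%type bool 2 2) :
  succ_NS (PS_Z01 R) (csir (N_Z01 R)) Z <= 1.
Proof.
apply: succ_NS_le1 => //; first by move=> s; rewrite /PS_Z01 invr_ge0 ler0n.
- exact: sum_PS_Z01.
- exact/csir_ge0/N_Z01_ge0.
by move=> x s; rewrite sum_csir sum_N_Z01.
Qed.

Section FlipScheme.
Variable R : realType.

Definition flip_word (w : 'I_2) (s : word 2 bool) : word 2 bool :=
  [ffun j => s j (+) (w != ord0)].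

Definition flip_enc (j : 'I_2) (x : word 2 bool) (w : 'I_2) (s : word 2 bool)
  (q : unit) (xj : bool) : R := (xj == flip_word w s j)%:R.

Definition mismatch_dec (y : word 2 (bool * bool)%type) (q : unit) (w' : 'I_2) : R :=
  ((w' != ord0) == (((y ord0).1 != (y ord0).2) || ((y ord_max).1 != (y ord_max).2)))%:R.

Lemma unit_PQ_ge0 (q : unit) : 0 <= 1 :> R. Proof. exact: ler01. Qed.

Lemma unit_PQ_sum : \sum_(q : unit) 1 = 1 :> R.
Proof. exact: sum_unit. Qed.

Lemma flip_enc_ge0 j x w s q xj : 0 <= flip_enc j x w s q xj.
Proof. exact: ler0n. Qed.

Lemma flip_enc_sum j x w s q : \sum_xj flip_enc j x w s q xj = 1.
Proof. by rewrite big_bool /flip_enc; case: (flip_word w s j); rewrite /= ?addr0 ?add0r. Qed.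

Lemma flip_enc_causal (j : 'I_2) (x x' : word 2 bool) w (s s' : word 2 bool) q xj :
  (forall k : 'I_2, (k < j)%N -> x k = x' k) ->
  (forall k : 'I_2, (k <= j)%N -> s k = s' k) ->
  flip_enc j x w s q xj = flip_enc j x' w s' q xj.
Proof. by move=> _ ss'; rewrite /flip_enc !ffunE ss'. Qed.

Lemma mismatch_dec_ge0 y q w' : 0 <= mismatch_dec y q w'.
Proof. exact: ler0n. Qed.

Lemma mismatch_dec_sum y q : \sum_w' mismatch_dec y q w' = 1.
Proof. by rewrite big_ord2 /mismatch_dec /=; case: (_ || _); rewrite ?addr0 ?add0r. Qed.

Definition flip_scheme : cscheme R bool (bool * bool)%type bool 2 2 unit :=
  CScheme unit_PQ_ge0 unit_PQ_sum flip_enc_ge0 flip_enc_sum flip_enc_causal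
    mismatch_dec_ge0 mismatch_dec_sum.

Lemma encn_flip x w s : encn flip_scheme x w s tt = (x == flip_word w s)%:R.
Proof. exact: prod_eq_indicator. Qed.

Lemma flip_detects (w : 'I_2) (s : word 2 bool) :
  \sum_y Nn (csir (N_Z01 R)) (flip_word w s) s y * mismatch_dec y tt w
  = if w == ord0 then 1 else 3 / 4.
Proof.
rewrite -[s]word2K; do 3 rewrite ?big_word2 ?sum_pair ?big_bool.
rewrite /Nn /mismatch_dec /flip_word.
rewrite !big_ord2 /= !word2_0 !word2_1 !ffunE /csir /N_Z01.
case: (s ord0) (s ord_max) w => [] [] [[|[|//]] w2] /=; rewrite ?mulr1n ?mulr0n; lra.
Qed.

Lemma flip_scheme_success :
  succ_C (PS_Z01 R) (csir (N_Z01 R)) flip_scheme = 7 / 8.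
Proof.
have collapse w : \sum_(q : unit) 1 * \sum_x \sum_s \sum_y
      PSn (PS_Z01 R) s * encn flip_scheme x w s q * Nn (csir (N_Z01 R)) x s y
      * mismatch_dec y q w
    = \sum_(s : word 2 bool) PSn (PS_Z01 R) s * (if w == ord0 then 1 else 3 / 4).
  rewrite sum_unit mul1r exchange_big /=; apply: eq_bigr => s _.
  rewrite -(flip_detects w s) mulr_sumr exchange_big /=; apply: eq_bigr => y _.
  under eq_bigr => x _ do rewrite encn_flip -!mulrA mulrCA.
  exact: big_indicator_eq.
rewrite /succ_C /=; under eq_bigr => w _ do rewrite collapse.
rewrite big_ord2 /= !big_word2 !big_bool /= !PSn_Z01 expr2.
lra.
Qed.

End FlipScheme.

Theorem theorem2 (R : realType) :
  eta_C_opt (PS_Z01 R) (csir (N_Z01 R)) 2 2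
    <= eta_NS_opt (PS_Z01 R) (csir (N_Z01 R)) 2 2 /\
  7 / 8 <= eta_C_opt (PS_Z01 R) (csir (N_Z01 R)) 2 2 /\
  eta_NS_opt (PS_Z01 R) (N_Z01 R) 2 2 <= 13 / 16.
Proof.
rewrite /eta_C_opt /eta_NS_opt.
have C_as_NS Q (c : cscheme R bool (bool * bool)%type bool 2 2 Q) :
    succ_C (PS_Z01 R) (csir (N_Z01 R)) c
    = succ_NS (PS_Z01 R) (csir (N_Z01 R)) (ns_of_cscheme c false).
  exact: succ_ns_of_cscheme.
have flip_in : exists Q (c : cscheme R bool (bool * bool)%type bool 2 2 Q),
    7 / 8 = succ_C (PS_Z01 R) (csir (N_Z01 R)) c.
  by exists unit, (flip_scheme R); rewrite flip_scheme_success.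
split; [|split].
- apply: sup_le; last 2 first.
  + by exists (7 / 8).
  + split; last by exists 1 => _ [Z ->]; apply: csir_Z01_success_le1.
    by exists (7 / 8), (ns_of_cscheme (flip_scheme R) false); rewrite -C_as_NS flip_scheme_success.
  move=> _ [Q [c ->]]; exists (succ_NS (PS_Z01 R) (csir (N_Z01 R)) (ns_of_cscheme c false)).
  by split; [exists (ns_of_cscheme c false) | rewrite C_as_NS].
- apply: ub_le_sup => //; exists 1 => _ [Q [c ->]].
  by rewrite C_as_NS; apply: csir_Z01_success_le1.
apply: sup_le_ge0_ubound => [|_ [Z ->]]; last exact: Z01_NS_success_le.
lra.
Qed.
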